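(* Let $x \in \mathbb{Z}$ and let $m \in \mathbb{N}$ be odd with $m \geq 3$. Suppose $\left\lfloor \frac{x^2+7}{4} \right\rfloor = 2^m$. Then, in the ring of integers $\mathcal{O}_K$ of $K = \mathbb{Q}(\sqrt{-7})$, we have $1 - 2\theta = \theta^m - \theta'^m$, where $\theta = \frac{1+\sqrt{-7}}{2}$ and $\theta' = 1-\theta = \frac{1-\sqrt{-7}}{2}$ (equivalently, $-\sqrt{-7} = \theta^m - \theta'^m$).
   Context: $K = \mathbb{Q}(\sqrt{-7})$ with a fixed square root $\sqrt{-7}$; $\theta = \frac{1+\sqrt{-7}}{2}$ is the root of $X^2 - X + 2$, which lies in $\mathcal{O}_K$, and $\theta' = 1 - \theta$. The quotient $\lfloor\cdot\rfloor$ denotes integer (floor) division, as in the formal statement. *)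

From mathcomp Require Import all_boot all_order all_algebra all_field.
Set Implicit Arguments. Unset Strict Implicit. Unset Printing Implicit Defensive.
Import Order.TTheory GRing.Theory Num.Theory.
Local Open Scope ring_scope.

(* K = Q(sqrt(-7)) is realized inside the algebraic complex numbers algC;
   O_K = Z[theta] is a subring of algC, so equality in O_K is equality in algC. *)

Definition sqrtm7 : algC := sqrtC (- 7%:R).

Definition theta : algC := (1 + sqrtm7) / 2%:R.

Definition theta' : algC := 1 - theta.

From mathcomp Require Import all_boot all_order all_algebra all_field.
From mathcomp Require Import zify ring.
Set Implicit Arguments.
Unset Strict Implicit.
Unset Printing Implicit Defensive.
Import Order.TTheory GRing.Theory Num.Theory.
Local Open Scope ring_scope.

(* For x = 2c the quotient is c^2 + 1, never divisible
   by 8, so x = 2c + 1 and c + theta has norm c^2 + c + 2 = 2^m in Z[theta].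
   Since 2 = theta theta' and the units are +-1, an element of norm 2^k not
   divisible by 2 is +-theta^k or +-theta'^k: divide by theta or theta'
   according to parity and descend on k.  So the theta-coordinate b_m of
   theta^m is +-1, while b_m = 3 (mod 4) for odd m >= 3; hence b_m = -1 and
   theta^m - theta'^m = b_m (theta - theta'). *)

(* (a, b) stands for a + b theta. *)
Definition zth := (int * int)%type.

Definition zth_val (R : pzRingType) (t : R) (z : zth) : R := z.1%:~R + z.2%:~R * t.

Definition zth_scale (e : int) (z : zth) : zth := (e * z.1, e * z.2).

Definition zth_mul_theta (z : zth) : zth := (-2 * z.2, z.1 + z.2).

Definition zth_conj (z : zth) : zth := (z.1 + z.2, - z.2).

Definition zth_norm (z : zth) : int := z.1 ^+ 2 + z.1 * z.2 + 2 * z.2 ^+ 2.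

Definition zth_primitive (z : zth) : bool := ~~ ((2 %| z.1)%Z && (2 %| z.2)%Z).

Definition zth_theta_pow (k : nat) : zth := iter k zth_mul_theta (1, 0).

Definition zth_assoc (z w : zth) : Prop := z = w \/ z = zth_scale (-1) w.

Definition zth_assoc_theta_pow (k : nat) (z : zth) : Prop :=
  zth_assoc z (zth_theta_pow k) \/ zth_assoc z (zth_conj (zth_theta_pow k)).

Lemma int_parity (a : int) : exists c, a = 2 * c \/ a = 2 * c + 1.
Proof. by exists (a %/ 2)%Z; lia. Qed.

Lemma zth_norm_mul_theta z : zth_norm (zth_mul_theta z) = 2 * zth_norm z.
Proof. rewrite /zth_norm /=; ring. Qed.

Lemma zth_norm_conj z : zth_norm (zth_conj z) = zth_norm z.
Proof. rewrite /zth_norm /=; ring. Qed.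

Lemma zth_conjK : involutive zth_conj.
Proof. by case=> a b; rewrite /zth_conj /=; congr pair; ring. Qed.

Lemma zth_primitive_conj z : zth_primitive (zth_conj z) = zth_primitive z.
Proof. case: z => a b; rewrite /zth_primitive /=; lia. Qed.

Lemma zth_primitive_mul_theta z :
  zth_primitive (zth_mul_theta z) -> zth_primitive z.
Proof. case: z => a b; rewrite /zth_primitive /=; lia. Qed.

Lemma zth_primitive_scale2 z : ~~ zth_primitive (zth_scale 2 z).
Proof. case: z => a b; rewrite /zth_primitive /=; lia. Qed.

Lemma zth_mul_thetaP z : (2 %| z.1)%Z -> exists w, z = zth_mul_theta w.
Proof.
case: z => a b /= a_even; exists (b + (a %/ 2)%Z, - (a %/ 2)%Z).
rewrite /zth_mul_theta /=; congr pair; lia.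
Qed.

(* theta theta' = 2 *)
Lemma zth_mul_theta_conj_mul_theta w :
  zth_mul_theta (zth_conj (zth_mul_theta w)) = zth_scale 2 (zth_conj w).
Proof.
by case: w => a b; rewrite /zth_mul_theta /zth_conj /zth_scale /=; congr pair; ring.
Qed.

Lemma zth_assoc_mul_theta z w :
  zth_assoc z w -> zth_assoc (zth_mul_theta z) (zth_mul_theta w).
Proof.
case=> ->; [left | right] => //.
by case: w => a b; rewrite /zth_mul_theta /zth_scale /=; congr pair; ring.
Qed.

Lemma zth_assoc_conj z w : zth_assoc z w -> zth_assoc (zth_conj z) (zth_conj w).
Proof.
case=> ->; [left | right] => //.
by case: w => a b; rewrite /zth_conj /zth_scale /=; congr pair; ring.
Qed.

Lemma zth_assoc_primitive z w : zth_assoc z w -> zth_primitive z = zth_primitive w.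
Proof. by case=> ->; case: w => a b; rewrite /zth_primitive /=; lia. Qed.

Lemma zth_norm_eq1 z : zth_norm z = 1 -> zth_assoc z (1, 0).
Proof.
case: z => a b; rewrite /zth_norm /= => nz.
have -> : b = 0 by nia.
have [] : a = 1 \/ a = -1 by nia.
  by move->; left.
by move->; right; rewrite /zth_scale.
Qed.

Lemma zth_norm_odd z : ~~ (2 %| z.1)%Z -> (2 %| z.2)%Z -> ~~ (2 %| zth_norm z)%Z.
Proof.
case: z => a b /= a_odd b_even.
have [c ->] : exists c, a = 2 * c + 1 by exists (a %/ 2)%Z; lia.
have [d ->] : exists d, b = 2 * d by exists (b %/ 2)%Z; lia.
rewrite (_ : zth_norm _ = 2 * (2 * c ^+ 2 + 2 * c + (2 * c + 1) * d + 4 * d ^+ 2) + 1).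
  by lia.
by rewrite /zth_norm /=; ring.
Qed.

Lemma zth_assoc_theta_pow_conj k z :
  zth_assoc_theta_pow k (zth_conj z) -> zth_assoc_theta_pow k z.
Proof.
by case=> /zth_assoc_conj; rewrite !zth_conjK; [right | left].
Qed.

Lemma zth_descent_even k :
  (forall w, zth_norm w = 2 ^+ k -> zth_primitive w -> zth_assoc_theta_pow k w) ->
  forall z, zth_norm z = 2 ^+ k.+1 -> zth_primitive z -> (2 %| z.1)%Z ->
  zth_assoc_theta_pow k.+1 z.
Proof.
move=> IH z norm_z prim_z /zth_mul_thetaP [w def_z]; subst z.
have norm_w : zth_norm w = 2 ^+ k.
  by move: norm_z; rewrite zth_norm_mul_theta exprS; lia.
case: (IH w norm_w (zth_primitive_mul_theta prim_z)) => /zth_assoc_mul_theta assoc_w.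
  by left.
case: k {IH norm_z norm_w} assoc_w => [|k] assoc_w; first by left.
move: prim_z; rewrite (zth_assoc_primitive assoc_w) /=.
by rewrite zth_mul_theta_conj_mul_theta (negbTE (zth_primitive_scale2 _)).
Qed.

Lemma zth_primitive_norm_pow2 k z :
  zth_norm z = 2 ^+ k -> zth_primitive z -> zth_assoc_theta_pow k z.
Proof.
elim: k z => [|k IH] z norm_z prim_z.
  by left; apply: zth_norm_eq1.
have [z1_even | z1_odd] := boolP (2 %| z.1)%Z.
  exact: zth_descent_even.
have z2_odd : ~~ (2 %| z.2)%Z.
  by apply/negP => /(zth_norm_odd z1_odd); rewrite norm_z exprS; lia.
apply: zth_assoc_theta_pow_conj; apply: zth_descent_even => //.
- by rewrite zth_norm_conj.
- by rewrite zth_primitive_conj.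
- by case: z z1_odd z2_odd {norm_z prim_z} => a b /=; lia.
Qed.

Lemma zth_assoc_theta_pow_coord2 k z : zth_assoc_theta_pow k z ->
  z.2 = (zth_theta_pow k).2 \/ z.2 = - (zth_theta_pow k).2.
Proof. by case=> -[] ->; rewrite /=; lia. Qed.

Lemma zth_theta_pow_odd m : odd m -> (3 <= m)%N ->
  exists u v, zth_theta_pow m = (4 * u + 2, 4 * v + 3).
Proof.
move=> m_odd m_ge3; have [n ->] : exists n, m = (2 * n + 3)%N.
  by exists (m./2 - 1)%N; move: m_ge3; have := odd_double_half m; rewrite m_odd -muln2; lia.
clear m_odd m_ge3; elim: n => [|n [u [v IH]]]; first by exists (-1), (-1).
have -> : (2 * n.+1 + 3 = (2 * n + 3).+2)%N by lia.
rewrite [zth_theta_pow _]/= -/(zth_theta_pow _) IH.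
by exists (- 2 * u - 2 * v - 3), (u - v - 1); rewrite /zth_mul_theta /=; congr pair; lia.
Qed.

Lemma expr_zth_theta_pow (R : comPzRingType) (t : R) : t ^+ 2 = t - 2%:R ->
  forall k, t ^+ k = zth_val t (zth_theta_pow k).
Proof.
move=> t_sqr; elim=> [|k IH]; first by rewrite /zth_val /= mul0r addr0.
rewrite exprS IH /zth_val [zth_theta_pow _]/= -/(zth_theta_pow _) /zth_mul_theta /=.
case: (zth_theta_pow k) => a b /=.
rewrite (_ : t * _ = a%:~R * t + b%:~R * t ^+ 2); last by ring.
by rewrite t_sqr intrD intrM; ring.
Qed.

Lemma theta_sqr : theta ^+ 2 = theta - 2%:R.
Proof.
have sqrtm7_sqr : sqrtm7 ^+ 2 = - 7%:R by rewrite /sqrtm7 sqrtCK.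
rewrite /theta; transitivity ((1 + 2%:R * sqrtm7 + sqrtm7 ^+ 2) / 4%:R).
  by field.
by rewrite sqrtm7_sqr; field.
Qed.

Lemma theta'_sqr : theta' ^+ 2 = theta' - 2%:R.
Proof.
rewrite /theta'; transitivity (1 - 2%:R * theta + theta ^+ 2); first by ring.
by rewrite theta_sqr; ring.
Qed.

Lemma sqr_add7_div4_pow2 (x : int) m : (3 <= m)%N ->
  ((x ^+ 2 + 7) %/ 4)%Z = 2 ^+ m -> zth_norm ((x %/ 2)%Z, 1) = 2 ^+ m.
Proof.
move=> m_ge3; rewrite -(subnKC m_ge3) exprD /zth_norm /=.
move: (2 ^+ (m - 3)) => p; rewrite !expr2.
have [c [->|->]] := int_parity x; last by rewrite (_ : (2 * c + 1) %/ 2 = c)%Z; lia.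
by have [d [->|->]] := int_parity c; lia.
Qed.

Theorem mainTheorem2 (x : int) (m : nat) :
  odd m -> (3 <= m)%N ->
  ((x ^+ 2 + 7) %/ 4)%Z = (2 ^ m)%N%:Z ->
  theta ^+ m - theta' ^+ m = 1 - 2%:R * theta.
Proof.
move=> m_odd m_ge3; rewrite -natz natrX => /(sqr_add7_div4_pow2 m_ge3) norm_c.
have prim_c : zth_primitive ((x %/ 2)%Z, 1) by rewrite /zth_primitive /=; lia.
have := zth_assoc_theta_pow_coord2 (zth_primitive_norm_pow2 norm_c prim_c).
have [u [v theta_m]] := zth_theta_pow_odd m_odd m_ge3.
rewrite theta_m /= => b_m; have {}b_m : (zth_theta_pow m).2 = -1.
  by rewrite theta_m /=; lia.
rewrite (expr_zth_theta_pow theta_sqr) (expr_zth_theta_pow theta'_sqr).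
by rewrite /zth_val b_m /theta'; ring.
Qed.
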